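(* Let $P$ denote the set of prime numbers, and let $Q \subseteq P$ be a random subset in which each prime $p$ is included independently with probability $1/2$. Define the completely multiplicative function $\lambda_Q : \mathbb{N} \to \{-1,1\}$ by $\lambda_Q(p) = -1$ if $p \in Q$, $\lambda_Q(p) = 1$ if $p \notin Q$, extended by $\lambda_Q(p_1^{e_1}\cdots p_k^{e_k}) = \lambda_Q(p_1)^{e_1}\cdots\lambda_Q(p_k)^{e_k}$. Fix an integer $k \ge 0$ and positive integers $i_1 < i_2 < \dots < i_k$, and set \[ T_N = \frac{1}{N}\sum_{n=1}^N \lambda_Q(n)\lambda_Q(n+i_1)\cdots\lambda_Q(n+i_k). \] Then there is a constant $C$ (depending only on $i_1,\dots,i_k$) such that $E(T_N^2) \le C N^{-0.05}$ for all $N \ge 1$, where $E$ denotes expectation over the random choice of $Q$.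
   Context: $\mathbb{N} = \{1,2,3,\dots\}$. *)

From HB Require Import structures.
From mathcomp Require Import all_boot all_order all_algebra.
From mathcomp Require Import all_classical all_reals all_analysis.
Set Implicit Arguments. Unset Strict Implicit. Unset Printing Implicit Defensive.
Import Order.TTheory GRing.Theory Num.Theory.
Local Open Scope ring_scope.

Definition lambdaQ {R : pzRingType} (Q : pred nat) (n : nat) : R :=
  \prod_(p <- primes n) (if Q p then (-1) ^+ logn p n else 1).

Definition TN {R : realType} (Q : pred nat) (ks : seq nat) (N : nat) : R :=
  N%:R^-1 * \sum_(1 <= n < N.+1)
              (lambdaQ Q n * \prod_(i <- ks) lambdaQ Q (n + i)%N).

(* E(T_N^2) over a random Q containing each prime independently with
   probability 1/2.  T_N only depends on Q restricted to {0,...,M-1} where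
   M = N + sum ks + 1 > N + max ks, so the expectation ks exactly the uniform
   average over all subsets S of {0,...,M-1} (the product measure's marginal;
   including non-primes as extra fair coins changes nothing). *)
Definition ETN2 {R : realType} (ks : seq nat) (N : nat) : R :=
  let M := (N + sumn ks).+1 in
  (2 ^+ M)^-1 *
    \sum_(S : {set 'I_M}) (TN (fun p => [exists i in S, val i == p]) ks N) ^+ 2.

From HB Require Import structures.
From mathcomp Require Import all_boot all_order all_algebra.
From mathcomp Require Import all_classical all_reals all_analysis.
From mathcomp Require Import zify.
From Stdlib Require PeanoNat.
Set Implicit Arguments. Unset Strict Implicit. Unset Printing Implicit Defensive.
Import Order.TTheory GRing.Theory Num.Theory.

(* Expanding the square, E(T_N^2) = N^-2 sum_{m,n} E[f(m) f(n)] with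
   f(n) = lambda_Q(n) lambda_Q(n + i_1) ... lambda_Q(n + i_k).  Flipping the
   membership of a prime p in Q multiplies f(m) f(n) by (-1)^v, v the p-adic
   valuation of the product of the two windows {m, m + i_j} and {n, n + i_j};
   so the expectation vanishes unless all these valuations are even, and it is
   at most 1 otherwise.  For such a pair write m = d s^2 with d squarefree: a
   prime factor of d larger than i_1 + ... + i_k divides no m + i_j, so it has
   odd valuation in the window of m, hence divides the window product of n.
   Thus d divides X_n = (i_1 + ... + i_k)! n (n + i_1) ... (n + i_k), and for
   fixed n there are at most tau(X_n) sqrt(N) admissible m.  The divisor bound
   tau(X) <= C_K X^(1/K) with K = 20 (k + 1) and X_n << N^(k+1) then gives
   O(N^(2 - 1/20)) admissible pairs. *)

Lemma size_add_divisors f d :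
  size (PrimeDecompAux.add_divisors f d) = f.2.+1 * size d.
Proof.
case: f => p e /=; elim: e => [|e IH] /=; first by rewrite mul1n.
by rewrite size_merge size_cat size_map IH mulSn addnC.
Qed.

Lemma size_divisors n : size (divisors n) = \prod_(p <- primes n) (logn p n).+1.
Proof.
rewrite /divisors -[RHS](big_map (fun p => (p, logn p n)) predT (fun f => f.2.+1)).
rewrite -prime_decompE; elim: (prime_decomp n) => [|f s IH]; first by rewrite big_nil.
by rewrite big_cons /= size_add_divisors IH.
Qed.

Lemma expn_succ_le_prime_pow K p e : 0 < K -> 1 < p ->
  e.+1 ^ K <= (if p < 2 ^ K then K ^ K else 1) * p ^ e.
Proof.
move=> K_gt0 p_gt1.
have e_lt : e < 2 ^ e by rewrite ltn_expl.
have le_2p : 2 ^ e <= p ^ e by case: e {e_lt} => // e; rewrite leq_exp2r.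
case: ifP => [_ | /negbT]; last first.
  rewrite -leqNgt mul1n => leKp.
  rewrite (leq_trans (_ : _ <= (2 ^ e) ^ K)) ?leq_exp2r // expnAC.
  by case: (e) => // e'; rewrite leq_exp2r.
have e_le : e.+1 <= K * 2 ^ (e %/ K).
  rewrite {1}(divn_eq e K).
  have := ltn_pmod e K_gt0; have := ltn_expl (e %/ K) (isT : 1 < 2); nia.
rewrite (leq_trans (_ : _ <= (K * 2 ^ (e %/ K)) ^ K)) ?leq_exp2r //.
rewrite expnMn leq_mul2l -expnM (leq_trans _ le_2p) ?orbT //.
by rewrite leq_pexp2l // leq_trunc_div.
Qed.

Lemma divisor_bound K n : 0 < K -> 0 < n ->
  size (divisors n) ^ K <= (K ^ K) ^ (2 ^ K) * n.
Proof.
move=> K_gt0 n_gt0; rewrite size_divisors.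
have -> : (\prod_(p <- primes n) (logn p n).+1) ^ K =
          \prod_(p <- primes n) (logn p n).+1 ^ K.
  by elim: (primes n) => [|p s IH]; rewrite ?big_nil ?exp1n // !big_cons expnMn IH.
rewrite [X in _ <= _ * X](prod_prime_decomp n_gt0) prime_decompE big_map /=.
apply: (@leq_trans (\prod_(p <- primes n)
    ((if p < 2 ^ K then K ^ K else 1) * p ^ logn p n))).
  rewrite big_seq [leqRHS]big_seq; apply: leq_prod => p; rewrite mem_primes.
  by case/andP=> /prime_gt1 p_gt1 _; apply: expn_succ_le_prime_pow.
rewrite big_split /= leq_mul2r -big_mkcond /= big_const_seq iter_muln_1; apply/orP; right.
rewrite leq_pexp2l ?expn_gt0 ?K_gt0 // -size_filter -[X in _ <= X](size_iota 0 (2 ^ K)).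
apply: uniq_leq_size; first exact/filter_uniq/primes_uniq.
by move=> x; rewrite mem_filter mem_iota => /andP[].
Qed.

Definition squarefree d := forall p, prime p -> ~~ (p ^ 2 %| d).

Lemma logn_squarefree p d : prime p -> squarefree d -> 0 < d -> p %| d -> logn p d = 1.
Proof.
move=> p_pr sq_d d_gt0 p_d.
have : 0 < logn p d by rewrite logn_gt0 mem_primes p_pr d_gt0.
by have := sq_d p p_pr; rewrite pfactor_dvdn //; case: (logn p d) => [|[]].
Qed.

Lemma dvdn_squarefree d X : squarefree d -> 0 < d ->
  (forall p, prime p -> p %| d -> p %| X) -> d %| X.
Proof.
move=> sq_d d_gt0 dvdX; apply/dvdn_partP => // p; rewrite inE mem_primes.
by case/and3P=> p_pr _ p_d; rewrite p_part logn_squarefree // expn1 dvdX.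
Qed.

Lemma squarefree_decomposition m : 0 < m ->
  exists d s, [/\ squarefree d, 0 < s & m = d * s ^ 2].
Proof.
move=> m_gt0.
have ex_sq : exists s, s.+1 ^ 2 %| m by exists 0; rewrite dvd1n.
have sq_le s : s.+1 ^ 2 %| m -> s <= m.
  move/(dvdn_leq m_gt0); rewrite -mulnn; nia.
case: (ex_maxnP ex_sq sq_le) => s sq_m s_max.
exists (m %/ s.+1 ^ 2), s.+1; split; rewrite ?divnK //.
move=> p p_pr; apply/negP => p2_d.
have : (p * s.+1) ^ 2 %| m by rewrite expnMn -(divnK sq_m) dvdn_mul.
have p_gt1 := prime_gt1 p_pr.
have -> : p * s.+1 = (p * s.+1).-1.+1 by rewrite prednK // muln_gt0 ltnW.
move/s_max; nia.
Qed.

Lemma nat_sqrt_bounds N : Nat.sqrt N ^ 2 <= N < (Nat.sqrt N).+1 ^ 2.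
Proof.
rewrite -!mulnn.
by case: (PeanoNat.Nat.sqrt_spec N (PeanoNat.Nat.le_0_l N)) => /ssrnat.leP -> /ssrnat.ltP.
Qed.

Lemma count_squarefree_part_dvdn (A : pred nat) X N : 0 < X ->
  (forall m d s, A m -> 0 < m <= N -> squarefree d -> m = d * s ^ 2 -> d %| X) ->
  count A (iota 1 N) <= size (divisors X) * Nat.sqrt N.
Proof.
move=> X_gt0 part_dvdX.
rewrite -size_filter -[X in _ * X](size_iota 1) -(size_allpairs (fun d s => d * s ^ 2)).
apply: uniq_leq_size; first exact/filter_uniq/iota_uniq.
move=> m; rewrite mem_filter mem_iota add1n ltnS => /and3P[Am m_gt0 m_le].
have [d [s [sq_d s_gt0 m_eq]]] := squarefree_decomposition m_gt0.
rewrite m_eq; apply: allpairs_f; first by rewrite -dvdn_divisors // (part_dvdX m _ s) ?m_gt0.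
have d_gt0 : 0 < d by move: m_gt0; rewrite m_eq muln_gt0 => /andP[].
have s2_le : s ^ 2 <= N by rewrite (leq_trans _ m_le) // m_eq leq_pmull.
case/andP: (nat_sqrt_bounds N) => _ N_lt.
by rewrite mem_iota s_gt0 add1n -ltn_sqr (leq_ltn_trans s2_le).
Qed.

Lemma mem_leq_sumn s i : i \in s -> i <= sumn s.
Proof. by move=> i_s; rewrite sumnE (big_rem i) //= leq_addr. Qed.

Lemma dvdn_prod_of_odd_sum_logn p (s : seq nat) :
  odd (\sum_(x <- s) logn p x) -> p %| \prod_(x <- s) x.
Proof.
elim: s => [|x s IH]; rewrite ?big_nil // !big_cons oddD.
case: (boolP (odd (logn p x))) => [odd_x _ | _ /IH]; last exact: dvdn_mull.
have : 0 < logn p x by case: (logn p x) odd_x.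
by rewrite logn_gt0 mem_primes => /and3P[_ _ /dvdn_mulr->].
Qed.

Definition window (ks : seq nat) n := n :: [seq n + i | i <- ks].

Lemma squarefree_part_dvdn_window ks M m n d s : all (fun i => 0 < i) ks ->
  0 < m < M -> squarefree d -> m = d * s ^ 2 ->
  (forall p, p < M -> ~~ odd (\sum_(x <- window ks m ++ window ks n) logn p x)) ->
  d %| (sumn ks)`! * \prod_(x <- window ks n) x.
Proof.
move=> ks_gt0 /andP[m_gt0 m_lt] sq_d m_eq even_pair.
have [d_gt0 s_gt0] : 0 < d /\ 0 < s.
  by apply/andP; move: m_gt0; rewrite m_eq muln_gt0 expn_gt0 orbF.
apply: dvdn_squarefree => // p p_pr p_d.
have [p_le | p_gt] := leqP p (sumn ks).
  by apply: dvdn_mulr; rewrite dvdn_fact // prime_gt0.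
apply/dvdn_mull/dvdn_prod_of_odd_sum_logn.
have p_m : p %| m by rewrite m_eq dvdn_mulr.
have odd_m : odd (\sum_(x <- window ks m) logn p x).
  rewrite big_cons big_map big1_seq ?addn0 => [|i /andP[_ i_ks]].
    by rewrite m_eq lognM ?expn_gt0 ?s_gt0 // lognX logn_squarefree // oddD oddM.
  apply: logn_coprime; rewrite prime_coprime // (dvdn_addr i p_m).
  apply/negP => /(dvdn_leq (allP ks_gt0 i i_ks)).
  by rewrite leqNgt (leq_ltn_trans (mem_leq_sumn i_ks)).
have := even_pair p (leq_ltn_trans (dvdn_leq m_gt0 p_m) m_lt).
by rewrite big_cat oddD odd_m negbK.
Qed.

Lemma window_prod_gt0 ks n : 0 < n -> 0 < \prod_(x <- window ks n) x.
Proof.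
move=> n_gt0; rewrite big_cons big_map muln_gt0 n_gt0 prodn_gt0 // => i.
by rewrite addn_gt0 n_gt0.
Qed.

Lemma window_prod_le ks n : \prod_(x <- window ks n) x <= (n + sumn ks) ^ (size ks).+1.
Proof.
rewrite big_cons big_map expnS leq_mul ?leq_addr //.
rewrite -[size ks]count_predT -iter_muln_1 -big_const_seq big_seq [leqRHS]big_seq.
by apply: leq_prod => i /mem_leq_sumn; rewrite leq_add2l.
Qed.

Lemma divisor_bound_window ks : exists B, forall N n, 0 < n <= N ->
  size (divisors ((sumn ks)`! * \prod_(x <- window ks n) x)) ^ 20 <= B * N.
Proof.
set k := (size ks).+1; set K := 20 * k; set S := sumn ks.
set B := (K ^ K) ^ (2 ^ K) * S`! * S.+1 ^ k.
have B_gt0 : 0 < B by rewrite !muln_gt0 !expn_gt0 fact_gt0.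
exists B => N n /andP[n_gt0 n_le].
rewrite -(leq_exp2r _ _ (isT : 0 < k)) -expnM.
have X_gt0 : 0 < S`! * \prod_(x <- window ks n) x.
  by rewrite muln_gt0 fact_gt0 window_prod_gt0.
apply: (leq_trans (divisor_bound _ X_gt0)) => //.
apply: (@leq_trans (B * N ^ k)); last first.
  by rewrite expnMn leq_mul2r -{1}(expn1 B) leq_pexp2l ?orbT.
rewrite /B -!mulnA !leq_mul2l -expnMn (leq_trans (window_prod_le ks n)) ?orbT //.
by rewrite leq_exp2r //; nia.
Qed.

Lemma expn_sum_le (I : eqType) (r : seq I) F k b : 0 < k ->
  (forall i, i \in r -> F i ^ k <= b) -> (\sum_(i <- r) F i) ^ k <= size r ^ k * b.
Proof.
move=> k_gt0 Fb.
have max_b : (\max_(i <- r) F i) ^ k <= b.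
  rewrite big_seq; elim/big_ind: _ => [|x y bx by_|i /Fb //]; first by rewrite exp0n.
  by case: (leqP x y).
apply: (@leq_trans ((size r * \max_(i <- r) F i) ^ k)); last first.
  by rewrite expnMn leq_mul2l max_b orbT.
rewrite leq_exp2r // mulnC -iter_addn_0 -[size r]count_predT -big_const_seq.
by rewrite big_seq [leqRHS]big_seq leq_sum // => i i_r; apply: leq_bigmax_seq.
Qed.

(* logn p x = 0 when p is not prime, so only the primes below M matter. *)
Definition even_valuations M (s : seq nat) :=
  [forall p : 'I_M, ~~ odd (\sum_(x <- s) logn p x)].

Definition even_partners ks N n :=
  count (fun m => even_valuations (N + sumn ks).+1 (window ks m ++ window ks n)) (iota 1 N).

Definition even_pairs ks N := \sum_(1 <= n < N.+1) even_partners ks N n.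

Lemma even_partners_bound ks : all (fun i => 0 < i) ks ->
  exists B, forall N n, 0 < n <= N -> even_partners ks N n ^ 20 <= B * N ^ 11.
Proof.
move=> ks_gt0; have [B divB] := divisor_bound_window ks.
exists B => N n n_range; have [n_gt0 _] := andP n_range.
have X_gt0 : 0 < (sumn ks)`! * \prod_(x <- window ks n) x.
  by rewrite muln_gt0 fact_gt0 window_prod_gt0.
apply: (leq_trans (_ : _ <= (size (divisors _) * Nat.sqrt N) ^ 20)).
  rewrite leq_exp2r //; apply: count_squarefree_part_dvdn X_gt0 _.
  move=> m d s /forallP even_mn m_range sq_d m_eq.
  apply: (squarefree_part_dvdn_window (M := (N + sumn ks).+1)) sq_d m_eq _ => //.
    by case/andP: m_range => -> m_le; rewrite ltnS (leq_trans m_le) ?leq_addr.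
  by move=> p p_lt; apply: (even_mn (Ordinal p_lt)).
rewrite expnMn (expnS N 10) mulnA leq_mul ?divB // (expnM _ 2 10) leq_exp2r //.
by case/andP: (nat_sqrt_bounds N).
Qed.

Lemma even_pairs_bound ks : all (fun i => 0 < i) ks ->
  exists B, forall N, 0 < N -> even_pairs ks N ^ 20 <= B * N ^ 39.
Proof.
move=> /even_partners_bound[B partnersB]; exists B => N N_gt0.
apply: (leq_trans (expn_sum_le (b := B * N ^ 11) _ _)) => // [n|].
  by rewrite mem_index_iota ltnS; apply: partnersB.
by rewrite size_iota subn1 mulnCA -expnD leq_mul2l leq_pexp2l ?orbT.
Qed.

Local Open Scope ring_scope.

Section LambdaFlip.
Variables (R : comPzRingType) (Q Q' : pred nat) (p : nat).
Hypotheses (Q'_Q : forall q, q != p -> Q' q = Q q) (Q'_p : Q' p = ~~ Q p).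

Lemma lambdaQ_flip x : lambdaQ (R := R) Q' x = (-1) ^+ logn p x * lambdaQ Q x.
Proof.
rewrite /lambdaQ; case: (boolP (p \in primes x)) => [p_x | p_x].
  rewrite !(bigD1_seq p) ?primes_uniq //= mulrA; congr (_ * _).
    rewrite Q'_p; case: (Q p) => /=; last by rewrite mulr1.
    by rewrite -exprD -signr_odd addnn odd_double.
  by apply: eq_bigr => q /Q'_Q ->.
have -> : logn p x = 0%N by apply/eqP; rewrite -leqn0 leqNgt logn_gt0.
rewrite mul1r; apply: eq_big_seq => q q_x; rewrite Q'_Q //.
by apply: contra p_x => /eqP <-.
Qed.

Lemma prod_lambdaQ_flip s : \prod_(x <- s) lambdaQ (R := R) Q' x =
  (-1) ^+ (\sum_(x <- s) logn p x) * \prod_(x <- s) lambdaQ Q x.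
Proof.
elim: s => [|x s IH]; first by rewrite !big_nil mulr1.
by rewrite !big_cons IH lambdaQ_flip exprD mulrACA.
Qed.

End LambdaFlip.

Lemma normr_lambdaQ (R : numDomainType) Q x : `|lambdaQ (R := R) Q x| = 1.
Proof.
rewrite /lambdaQ normr_prod big1_seq // => p _.
by case: (Q p); rewrite ?normrX ?normrN1 ?expr1n ?normr1.
Qed.

Definition setQ M (S : {set 'I_M}) : pred nat := fun p => [exists i in S, val i == p].

Definition toggle M (i : 'I_M) (S : {set 'I_M}) := if i \in S then S :\ i else i |: S.

Section Toggle.
Variables (M : nat) (i : 'I_M).

Lemma toggleK : involutive (toggle i).
Proof.
move=> S; rewrite /toggle; case: (boolP (i \in S)) => i_S; rewrite !inE eqxx /=;
  by apply/setP => j; rewrite !inE; case: eqP => // ->; rewrite ?i_S ?(negbTE i_S).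
Qed.

Lemma setQ_val S : setQ S (val i) = (i \in S).
Proof.
apply/existsP/idP => [[j /andP[j_S /eqP/val_inj <-]] // | i_S].
by exists i; rewrite i_S eqxx.
Qed.

Lemma setQ_toggle S : setQ (toggle i S) (val i) = ~~ setQ S (val i).
Proof. by rewrite !setQ_val /toggle; case: ifP => _; rewrite !inE eqxx. Qed.

Lemma setQ_toggle_neq S q : q != val i -> setQ (toggle i S) q = setQ S q.
Proof.
move=> q_i; apply: eq_existsb => j; case: (eqVneq (val j) q) => [j_q | _]; last first.
  by rewrite !andbF.
have j_i : j != i by apply: contra q_i => /eqP <-; rewrite j_q.
by rewrite /toggle; case: ifP => _; rewrite !inE (negbTE j_i).
Qed.

End Toggle.

Lemma sum_prod_lambdaQ_eq0 (R : numDomainType) M (i : 'I_M) s :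
  odd (\sum_(x <- s) logn i x) ->
  \sum_(S : {set 'I_M}) \prod_(x <- s) lambdaQ (R := R) (setQ S) x = 0.
Proof.
move=> odd_s.
have flip S : \prod_(x <- s) lambdaQ (R := R) (setQ (toggle i S)) x =
              - \prod_(x <- s) lambdaQ (setQ S) x.
  rewrite (prod_lambdaQ_flip _ (@setQ_toggle_neq _ i S) (setQ_toggle i S)).
  by rewrite -signr_odd odd_s mulN1r.
set sum := \sum_(S : {set 'I_M}) _.
suff /eqP : sum = - sum by rewrite -addr_eq0 -mulr2n mulrn_eq0 => /eqP.
by rewrite {1}/sum (reindex_inj (can_inj (toggleK i))) /= -sumrN; apply: eq_bigr.
Qed.

Lemma sum_prod_lambdaQ_le (R : realDomainType) M s :
  \sum_(S : {set 'I_M}) \prod_(x <- s) lambdaQ (R := R) (setQ S) x <=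
  2 ^+ M * (even_valuations M s)%:R.
Proof.
case: (boolP (even_valuations M s)) => [_ | /forallPn[i]]; last first.
  by rewrite negbK => odd_s; rewrite (sum_prod_lambdaQ_eq0 _ odd_s) mulr0.
rewrite mulr1; apply: (le_trans (ler_sum _ (fun S _ => ler_norm _))).
rewrite (eq_bigr (fun=> 1)) => [|S _]; last first.
  by rewrite normr_prod big1_seq // => x _; apply: normr_lambdaQ.
by rewrite sumr_const -cardsT -powersetT card_powerset cardsT card_ord natrX.
Qed.

Lemma TN_window (R : realType) Q ks N : TN (R := R) Q ks N =
  N%:R^-1 * \sum_(1 <= n < N.+1) \prod_(x <- window ks n) lambdaQ Q x.
Proof. by congr (_ * _); apply: eq_bigr => n _; rewrite big_cons big_map. Qed.

Lemma ETN2_le_even_pairs (R : realType) ks N : (0 < N)%N ->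
  ETN2 (R := R) ks N <= (even_pairs ks N)%:R / N%:R ^+ 2.
Proof.
move=> N_gt0; rewrite /ETN2; set M := (N + sumn ks).+1.
set e := fun m n => (even_valuations M (window ks m ++ window ks n))%:R : R.
have pairs_eq : (even_pairs ks N)%:R = \sum_(1 <= m < N.+1) \sum_(1 <= n < N.+1) e m n.
  rewrite /even_pairs natr_sum exchange_big; apply: eq_bigr => n _.
  rewrite /even_partners -sum1_count natr_sum big_mkcond /index_iota subn1.
  by apply: eq_bigr => m _; rewrite /e; case: even_valuations.
have TN2 (S : {set 'I_M}) : TN (R := R) (setQ S) ks N ^+ 2 = N%:R^-1 ^+ 2 *
    \sum_(1 <= m < N.+1) \sum_(1 <= n < N.+1) \prod_(x <- window ks m ++ window ks n)
      lambdaQ (setQ S) x.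
  rewrite TN_window exprMn; congr (_ * _); rewrite expr2 big_distrlr.
  by apply: eq_bigr => m _; apply: eq_bigr => n _; rewrite big_cat.
rewrite (eq_bigr _ (fun S _ => TN2 S)) -mulr_sumr exchange_big /=.
under eq_bigr do rewrite exchange_big /=.
rewrite pairs_eq mulrCA mulrC exprVn ler_wpM2r ?invr_ge0 ?exprn_ge0 //.
rewrite ler_pdivrMl ?exprn_gt0 // mulr_sumr ler_sum // => m _.
by rewrite mulr_sumr ler_sum // => n _; apply: sum_prod_lambdaQ_le.
Qed.

Lemma ler_powR_of_exprM (R : realType) (x b y : R) k : (0 < k)%N -> 0 <= x -> 0 < y ->
  x ^+ k * y <= b -> x <= b `^ (1 / k%:R) * y `^ (- (1 / k%:R)).
Proof.
move=> k_gt0 x_ge0 y_gt0 xky_le.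
have b_ge0 : 0 <= b by apply: le_trans xky_le; rewrite mulr_ge0 ?exprn_ge0 // ltW.
have k_neq0 : k%:R != 0 :> R by rewrite pnatr_eq0 -lt0n.
have root_eq : (b `^ (1 / k%:R) * y `^ (- (1 / k%:R))) ^+ k * y = b.
  rewrite exprMn -!powR_mulrn ?powR_ge0 // -!powRrM !mulNr !div1r !mulVf //.
  by rewrite powRr1 // powR_inv1 ?ltW // -mulrA mulVf ?mulr1 ?gt_eqF.
rewrite -(ler_pXn2r k_gt0) ?nnegrE ?mulr_ge0 ?powR_ge0 //.
by rewrite -(ler_pM2r y_gt0) root_eq.
Qed.

Theorem mainTheorem2 (R : realType) (ks : seq nat) :
  sorted ltn ks -> all (fun i => (0 < i)%N) ks ->
  exists C : R, forall N : nat, (1 <= N)%N ->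
    ETN2 (R := R) ks N <= C * (N%:R `^ (- (1 / 20%:R))).
Proof.
move=> _ ks_gt0; have [B pairsB] := even_pairs_bound ks_gt0.
exists (B%:R `^ (1 / 20%:R)) => N N_gt0.
have N_gt0R : (0 : R) < N%:R by rewrite ltr0n.
have ETN2_ge0 : 0 <= ETN2 (R := R) ks N.
  by rewrite mulr_ge0 ?invr_ge0 ?exprn_ge0 // sumr_ge0 // => S _; apply: sqr_ge0.
apply: ler_powR_of_exprM => //.
rewrite -(ler_pM2r (exprn_gt0 39 N_gt0R)) -mulrA -exprS (exprM _ 2 20) -exprMn.
apply: (le_trans (y := (even_pairs ks N)%:R ^+ 20)).
  rewrite ler_pXn2r ?nnegrE ?(mulr_ge0 ETN2_ge0) ?exprn_ge0 // -ler_pdivlMr ?exprn_gt0 //.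
  exact: ETN2_le_even_pairs.
by rewrite -!natrX -natrM ler_nat pairsB.
Qed.
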